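(* There exists a constant $\epsilon_{\mathrm{cut}}>0$ depending only on the black hole parameters such that the following holds: if $\omega\in\mathbb R$, $m\in\mathbb Z$, $\ell\ge|m|$ and $|\omega-\omega_rm|\le\epsilon_{\mathrm{cut}}m$ for some $r\in[r_-,r_+]$, then $$L:=\lambda_{m\ell}(a\omega)+a^2\omega^2-2m\omega a\Xi\ge c\,m^2$$ for a constant $c>0$ depending only on the black hole parameters.
   Context: Kerr–AdS parameters: $\Lambda<0$, $l=\sqrt{-3/\Lambda}$, $M>0$, $0<a<l$, $\Delta(r)=(r^2+a^2)(1+r^2/l^2)-2Mr$ with positive roots $r_-<r_+$ and $r_+^2>al$. $\Xi=1-a^2/l^2$, $\Delta_\theta=1-\frac{a^2}{l^2}\cos^2\theta$, $\omega_r=\frac{a\Xi}{r^2+a^2}$. $\lambda_{m\ell}(\xi)$, $\ell\ge|m|$, are the simple eigenvalues (in ascending order) of the self-adjoint Sturm–Liouville operator on $L^2((0,\pi);\sin\theta\,d\theta)$ $P(\xi)f=-\frac{1}{\sin\theta}\partial_\theta(\Delta_\theta\sin\theta\,\partial_\theta f)+\frac{\Xi^2m^2}{\Delta_\theta\sin^2\theta}f-\Xi\xi^2\Delta_\theta^{-1}\cos^2\theta f-2m\xi\frac{\Xi}{\Delta_\theta}\frac{a^2}{l^2}\cos^2\theta f+\frac{2}{l^2}a^2\sin^2\theta f$. *)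

From Stdlib Require Import Reals ZArith.
From Coquelicot Require Import Coquelicot.
Open Scope R_scope.

(* Kerr-AdS quantities; l = sqrt(-3/Lambda) > 0. *)
Definition Delta_r (l M a r : R) : R :=
  (r^2 + a^2) * (1 + r^2 / l^2) - 2 * M * r.

Definition Xi (l a : R) : R := 1 - a^2 / l^2.

Definition Delta_th (l a th : R) : R := 1 - a^2 / l^2 * (cos th)^2.

Definition omega_r (l a r : R) : R := a * Xi l a / (r^2 + a^2).

Definition P_pot (l a : R) (m : Z) (xi th : R) : R :=
  (Xi l a)^2 * (IZR m)^2 / (Delta_th l a th * (sin th)^2)
  - Xi l a * xi^2 / Delta_th l a th * (cos th)^2
  - 2 * IZR m * xi * Xi l a / Delta_th l a th * (a^2 / l^2) * (cos th)^2
  + 2 / l^2 * a^2 * (sin th)^2.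

(* lam is an eigenvalue of the self-adjoint Sturm-Liouville operator P(xi)
   (with azimuthal number m) on L^2((0,pi); sin th dth): there is a nonzero
   eigenfunction f in the operator domain (bounded on (0,pi), which selects
   the self-adjoint (Friedrichs) realization at the singular endpoints),
   twice differentiable in the Sturm-Liouville sense, with P(xi) f = lam f. *)
Definition is_P_eigenvalue (l a : R) (m : Z) (xi lam : R) : Prop :=
  exists f f' : R -> R,
    (exists th, 0 < th < PI /\ f th <> 0) /\
    (exists B, forall th, 0 < th < PI -> Rabs (f th) <= B) /\
    (forall th, 0 < th < PI -> is_derive f th (f' th)) /\
    (forall th, 0 < th < PI ->
        ex_derive (fun t => Delta_th l a t * sin t * f' t) th) /\
    (forall th, 0 < th < PI ->
        - / sin th * Derive (fun t => Delta_th l a t * sin t * f' t) th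
        + P_pot l a m xi th * f th = lam * f th).

From Stdlib Require Import Reals ZArith Lra.
From Coquelicot Require Import Coquelicot.
Open Scope R_scope.

(* Completing the square, the potential of P(xi) is
     (Xi m - xi sin^2 th)^2 / (Delta_th sin^2 th) + 2 (a^2/l^2) sin^2 th - xi^2 + 2 m xi Xi,
   so it exceeds lam by at least (Xi delta m)^2 - L as soon as xi = a omega <= Xi m (1 - delta).
   Since omega_r decreases in r, the cutoff with r >= r_- gives this for
   delta = r_-^2 / (2 (r_-^2 + a^2)) and eps_cut = Xi delta / a.
   If L < (Xi delta m)^2, a bounded eigenfunction f would thus solve
   (Delta_th sin th f')' = sin th W f with W > 0.  Then the flux f Delta_th sin th f' is
   nondecreasing.  Were it positive (negative) somewhere, (f^2)' >= c / (pi - th) near pi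
   (resp. (f^2)' <= - c / th near 0) and f^2 would blow up logarithmically.  So the flux
   vanishes identically, and so does its derivative Delta_th sin th f'^2 + sin th W f^2,
   which forces f = 0. *)

Lemma nondecreasing_of_derive_nonneg (F F' : R -> R) (x y : R) :
  x <= y ->
  (forall t, x <= t <= y -> is_derive F t (F' t)) ->
  (forall t, x <= t <= y -> 0 <= F' t) ->
  F x <= F y.
Proof.
  intros Hxy HF HF'.
  destruct (Req_dec x y) as [<- | Hne]; [lra |].
  destruct (MVT_cor3 F F' x y) as [c [Hxc [Hcy ->]]]; [lra | |].
  - intros t Hxt Hty. apply is_derive_Reals, HF. lra.
  - assert (0 <= F' c) by (apply HF'; lra). nra.
Qed.

Lemma Rdiv_le_compat_pos (x y p q : R) :
  0 < x <= y -> 0 < p <= q -> x / q <= y / p.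
Proof.
  intros Hxy Hpq. unfold Rdiv.
  apply Rmult_le_compat; [lra | | lra |].
  - left. apply Rinv_0_lt_compat. lra.
  - apply Rinv_le_contravar; lra.
Qed.

Lemma unbounded_of_log_derive_right (F F' : R -> R) (t1 b k : R) :
  0 < k -> t1 < b ->
  (forall t, t1 <= t < b -> is_derive F t (F' t)) ->
  (forall t, t1 <= t < b -> k / (b - t) <= F' t) ->
  forall B, exists t, t1 <= t < b /\ B < F t.
Proof.
  intros Hk Hb HF HF' B.
  set (Phi t := F t + k * ln (b - t)).
  assert (HPhi : forall t, t1 <= t < b -> Phi t1 <= Phi t).
  { intros t Ht.
    apply (nondecreasing_of_derive_nonneg Phi (fun u => F' u - k / (b - u))); [lra | |].
    - intros u Hu.
      assert (Hln : is_derive (fun v => k * ln (b - v)) u (- (k / (b - u)))).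
      { auto_derive; [lra | field; lra]. }
      exact (is_derive_plus _ _ _ _ _ (HF u ltac:(lra)) Hln).
    - intros u Hu. specialize (HF' u ltac:(lra)). lra. }
  set (K := (B - Phi t1) / k + 1).
  set (t := b - Rmin (b - t1) (exp (- K))).
  assert (Hmin : 0 < Rmin (b - t1) (exp (- K)) <= b - t1).
  { split; [apply Rmin_pos; [lra | apply exp_pos] | apply Rmin_l]. }
  assert (Hln : ln (b - t) <= - K).
  { rewrite <- (ln_exp (- K)). unfold t.
    replace (b - (b - Rmin (b - t1) (exp (- K)))) with (Rmin (b - t1) (exp (- K))) by ring.
    apply ln_le; [lra | apply Rmin_r]. }
  assert (HkK : k * K = B - Phi t1 + k) by (unfold K; field; lra).
  exists t. split; [unfold t; lra |].
  specialize (HPhi t ltac:(unfold t; lra)). unfold Phi in HPhi at 2. nra.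
Qed.

Lemma unbounded_of_log_derive_left (F F' : R -> R) (a t1 k : R) :
  0 < k -> a < t1 ->
  (forall t, a < t <= t1 -> is_derive F t (F' t)) ->
  (forall t, a < t <= t1 -> F' t <= - (k / (t - a))) ->
  forall B, exists t, a < t <= t1 /\ B < F t.
Proof.
  intros Hk Ha HF HF' B.
  destruct (unbounded_of_log_derive_right (fun t => F (- t)) (fun t => - F' (- t))
              (- t1) (- a) k Hk ltac:(lra)) with B as [t [Ht HFt]].
  - intros t Ht.
    replace (- F' (- t)) with (scal (-1) (F' (- t)))
      by (unfold scal; simpl; unfold mult; simpl; ring).
    apply (is_derive_comp F Ropp); [apply HF; lra |].
    auto_derive; [easy | reflexivity].
  - intros t Ht. specialize (HF' (- t) ltac:(lra)).
    replace (- a - t) with (- t - a) by ring. lra.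
  - exists (- t). split; [lra | exact HFt].
Qed.

Section PositivePotential.

Variables (D W f f' : R -> R) (B : R).
Hypothesis D_range : forall t, 0 < t < PI -> 0 < D t <= 1.
Hypothesis W_pos : forall t, 0 < t < PI -> 0 < W t.
Hypothesis f_derive : forall t, 0 < t < PI -> is_derive f t (f' t).
Hypothesis flux_equation : forall t, 0 < t < PI ->
  is_derive (fun u => D u * sin u * f' u) t (sin t * W t * f t).
Hypothesis f_bounded : forall t, 0 < t < PI -> Rabs (f t) <= B.

Let flux t := f t * (D t * sin t * f' t).

Lemma flux_derive t : 0 < t < PI ->
  is_derive flux t (D t * sin t * f' t ^ 2 + sin t * W t * f t ^ 2).
Proof.
  intros Ht.
  replace (D t * sin t * f' t ^ 2 + sin t * W t * f t ^ 2)
    with (f' t * (D t * sin t * f' t) + f t * (sin t * W t * f t)) by ring.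
  exact (is_derive_mult f _ t _ _ (f_derive t Ht) (flux_equation t Ht) Rmult_comm).
Qed.

Lemma flux_nondecreasing x y : 0 < x -> x <= y -> y < PI -> flux x <= flux y.
Proof.
  intros Hx Hxy Hy.
  apply (nondecreasing_of_derive_nonneg flux
           (fun t => D t * sin t * f' t ^ 2 + sin t * W t * f t ^ 2)); [lra | |].
  - intros t Ht. apply flux_derive. lra.
  - intros t Ht.
    assert (0 < sin t) by (apply sin_gt_0; lra).
    assert (HD := D_range t ltac:(lra)). assert (HW := W_pos t ltac:(lra)).
    assert (0 <= D t * sin t * f' t ^ 2) by (apply Rmult_le_pos; nra).
    assert (0 <= sin t * W t * f t ^ 2) by (apply Rmult_le_pos; nra).
    lra.
Qed.

Lemma sq_derive t : 0 < t < PI ->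
  is_derive (fun u => f u ^ 2) t (2 * flux t / (D t * sin t)).
Proof.
  intros Ht.
  assert (0 < sin t) by (apply sin_gt_0; lra).
  assert (HD := D_range t Ht).
  replace (2 * flux t / (D t * sin t)) with (INR 2 * f' t * f t ^ Nat.pred 2)
    by (unfold flux; simpl; field; lra).
  apply is_derive_pow, f_derive, Ht.
Qed.

Lemma sq_le_bound t : 0 < t < PI -> f t ^ 2 <= B ^ 2.
Proof. intros Ht. generalize (proj1 (Rabs_le_between _ _) (f_bounded t Ht)). nra. Qed.

Lemma flux_nonpos t1 : 0 < t1 < PI -> flux t1 <= 0.
Proof.
  intros Ht1. apply Rnot_lt_le. intros Hpos.
  destruct (unbounded_of_log_derive_right (fun u => f u ^ 2)
              (fun u => 2 * flux u / (D u * sin u)) t1 PI (2 * flux t1))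
    with (B ^ 2) as [t [Ht HBt]]; [lra | lra | | |].
  - intros t Ht. apply sq_derive. lra.
  - intros t Ht.
    assert (0 < sin t) by (apply sin_gt_0; lra).
    assert (sin t < PI - t) by (rewrite <- sin_PI_x; apply sin_lt_x; lra).
    assert (HD := D_range t ltac:(lra)).
    apply Rdiv_le_compat_pos.
    + assert (flux t1 <= flux t) by (apply flux_nondecreasing; lra). lra.
    + split; nra.
  - specialize (sq_le_bound t ltac:(lra)). lra.
Qed.

Lemma flux_nonneg t1 : 0 < t1 < PI -> 0 <= flux t1.
Proof.
  intros Ht1. apply Rnot_lt_le. intros Hneg.
  destruct (unbounded_of_log_derive_left (fun u => f u ^ 2)
              (fun u => 2 * flux u / (D u * sin u)) 0 t1 (- 2 * flux t1))
    with (B ^ 2) as [t [Ht HBt]]; [lra | lra | | |].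
  - intros t Ht. apply sq_derive. lra.
  - intros t Ht.
    assert (0 < sin t) by (apply sin_gt_0; lra).
    assert (sin t < t) by (apply sin_lt_x; lra).
    assert (HD := D_range t ltac:(lra)).
    assert (Hle : - 2 * flux t1 / (t - 0) <= - 2 * flux t / (D t * sin t)).
    { apply Rdiv_le_compat_pos.
      - assert (flux t <= flux t1) by (apply flux_nondecreasing; lra). lra.
      - split; nra. }
    replace (- 2 * flux t / (D t * sin t)) with (- (2 * flux t / (D t * sin t))) in Hle
      by (field; nra).
    lra.
  - specialize (sq_le_bound t ltac:(lra)). lra.
Qed.

Lemma bounded_solution_vanishes t0 : 0 < t0 < PI -> f t0 = 0.
Proof.
  intros Ht0.
  assert (Hloc : locally t0 (fun t => 0 = flux t)).
  { apply (locally_interval _ t0 0 PI); [exact (proj1 Ht0) | exact (proj2 Ht0) |].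
    intros t Ht0' HtPI.
    specialize (flux_nonpos t (conj Ht0' HtPI)).
    specialize (flux_nonneg t (conj Ht0' HtPI)). lra. }
  assert (Hzero : D t0 * sin t0 * f' t0 ^ 2 + sin t0 * W t0 * f t0 ^ 2 = 0).
  { rewrite <- (is_derive_unique _ _ _ (flux_derive t0 Ht0)).
    apply is_derive_unique, (is_derive_ext_loc _ _ _ _ Hloc). auto_derive; easy. }
  assert (0 < sin t0) by (apply sin_gt_0; lra).
  assert (HD := D_range t0 Ht0). assert (HW := W_pos t0 Ht0).
  assert (0 <= D t0 * sin t0 * f' t0 ^ 2) by (apply Rmult_le_pos; nra).
  assert (0 < sin t0 * W t0) by nra.
  assert (Hsq : f t0 ^ 2 = 0).
  { apply Rle_antisym; [| nra]. apply (Rmult_le_reg_l (sin t0 * W t0)); nra. }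
  apply Rsqr_0_uniq. rewrite Rsqr_pow2. exact Hsq.
Qed.

End PositivePotential.

Lemma Xi_pos (l a : R) : 0 < l -> a ^ 2 < l ^ 2 -> 0 < Xi l a.
Proof.
  intros Hl Hal. unfold Xi.
  assert (a ^ 2 / l ^ 2 < 1); [| lra].
  apply (Rdiv_lt_1 _ _ (pow_lt l 2 Hl)). exact Hal.
Qed.

Lemma Delta_th_range (l a th : R) : 0 < l -> a ^ 2 < l ^ 2 -> 0 < Delta_th l a th <= 1.
Proof.
  intros Hl Hal.
  assert (HXi := Xi_pos l a Hl Hal). unfold Xi in HXi. unfold Delta_th.
  assert (0 <= a ^ 2 / l ^ 2) by (apply Rdiv_le_0_compat; [nra | apply pow_lt; lra]).
  assert (0 <= cos th ^ 2 <= 1) by (generalize (COS_bound th); nra).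
  nra.
Qed.

Lemma P_pot_completed_square (l a : R) (m : Z) (xi th : R) :
  l <> 0 -> sin th <> 0 -> Delta_th l a th <> 0 ->
  P_pot l a m xi th =
    (Xi l a * IZR m - xi * sin th ^ 2) ^ 2 / (Delta_th l a th * sin th ^ 2)
    + 2 * (a ^ 2 / l ^ 2) * sin th ^ 2 - xi ^ 2 + 2 * IZR m * xi * Xi l a.
Proof.
  intros Hl Hs HD.
  assert (Hcos : cos th ^ 2 = 1 - sin th ^ 2) by (generalize (sin2_cos2 th); unfold Rsqr; nra).
  unfold P_pot, Delta_th, Xi in *. rewrite Hcos in *.
  field. repeat split; [exact Hl | exact Hs |].
  intros Hz. apply HD.
  replace (1 - a ^ 2 / l ^ 2 * (1 - sin th ^ 2)) with ((l ^ 2 - a ^ 2 * (1 - sin th ^ 2)) / l ^ 2)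
    by (field; exact Hl).
  rewrite Hz. field. exact Hl.
Qed.

Lemma P_pot_lower_bound (l a : R) (m : Z) (xi delta th : R) :
  0 < l -> a ^ 2 < l ^ 2 -> 0 < th < PI -> 0 <= IZR m -> 0 <= delta <= 1 ->
  xi <= Xi l a * IZR m * (1 - delta) ->
  (Xi l a * IZR m * delta) ^ 2 - xi ^ 2 + 2 * IZR m * xi * Xi l a <= P_pot l a m xi th.
Proof.
  intros Hl Hal Hth Hm Hdelta Hxi.
  assert (Hs : 0 < sin th) by (apply sin_gt_0; lra).
  assert (HD := Delta_th_range l a th Hl Hal).
  assert (HXi := Xi_pos l a Hl Hal).
  rewrite P_pot_completed_square by lra.
  set (s := sin th ^ 2) in *.
  assert (Hs1 : 0 < s <= 1) by (unfold s; generalize (SIN_bound th); split; nra).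
  set (Y := Xi l a * IZR m - xi * s).
  assert (HXm : 0 <= Xi l a * IZR m) by nra.
  assert (HY : Xi l a * IZR m * delta <= Y).
  { unfold Y. destruct (Rle_or_lt 0 xi); nra. }
  assert (HYq : Y ^ 2 <= Y ^ 2 / (Delta_th l a th * s)).
  { unfold Rdiv.
    assert (1 <= / (Delta_th l a th * s)).
    { rewrite <- Rinv_1. apply Rinv_le_contravar; nra. }
    nra. }
  assert (0 <= 2 * (a ^ 2 / l ^ 2) * s).
  { apply Rmult_le_pos; [| lra].
    apply Rmult_le_pos; [lra | apply Rdiv_le_0_compat; [nra | apply pow_lt; lra]]. }
  assert (0 <= Xi l a * IZR m * delta) by (apply Rmult_le_pos; lra).
  nra.
Qed.

Definition cut_delta (a rm : R) : R := rm ^ 2 / (2 * (rm ^ 2 + a ^ 2)).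

Lemma cut_delta_range (a rm : R) : 0 < rm -> 0 < cut_delta a rm <= 1 / 2.
Proof.
  intros Hrm. unfold cut_delta.
  assert (0 < rm ^ 2) by (apply pow_lt; lra).
  assert (0 <= a ^ 2) by nra.
  split.
  - apply Rdiv_lt_0_compat; lra.
  - apply Rmult_le_reg_r with (2 * (rm ^ 2 + a ^ 2)); [lra |].
    field_simplify; lra.
Qed.

Lemma a_omega_r_le (l a rm r : R) :
  0 < a -> 0 <= Xi l a -> 0 < rm <= r ->
  a * omega_r l a r <= Xi l a * (1 - 2 * cut_delta a rm).
Proof.
  intros Ha HXi Hr. unfold omega_r, cut_delta.
  replace (1 - 2 * (rm ^ 2 / (2 * (rm ^ 2 + a ^ 2)))) with (a ^ 2 / (rm ^ 2 + a ^ 2))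
    by (field; nra).
  replace (a * (a * Xi l a / (r ^ 2 + a ^ 2))) with (Xi l a * (a ^ 2 / (r ^ 2 + a ^ 2)))
    by (field; nra).
  apply Rmult_le_compat_l; [exact HXi |].
  apply Rmult_le_compat_l; [nra |].
  apply Rinv_le_contravar; nra.
Qed.

Lemma a_omega_le_of_cutoff (l a rm r omega mu : R) :
  0 < a -> 0 <= Xi l a -> 0 < rm <= r -> 0 <= mu ->
  Rabs (omega - omega_r l a r * mu) <= Xi l a * cut_delta a rm / a * mu ->
  a * omega <= Xi l a * mu * (1 - cut_delta a rm).
Proof.
  intros Ha HXi Hr Hmu Hcut.
  assert (Hor := a_omega_r_le l a rm r Ha HXi Hr).
  assert (Hgap : a * (omega - omega_r l a r * mu) <= Xi l a * cut_delta a rm * mu).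
  { replace (Xi l a * cut_delta a rm * mu) with (a * (Xi l a * cut_delta a rm / a * mu))
      by (field; lra).
    apply Rmult_le_compat_l; [lra |].
    eapply Rle_trans; [apply Rle_abs | exact Hcut]. }
  nra.
Qed.

Lemma P_eigenfunction_flux (l a : R) (m : Z) (xi lam : R) (f f' : R -> R) (th : R) :
  0 < th < PI ->
  ex_derive (fun t => Delta_th l a t * sin t * f' t) th ->
  - / sin th * Derive (fun t => Delta_th l a t * sin t * f' t) th
    + P_pot l a m xi th * f th = lam * f th ->
  is_derive (fun t => Delta_th l a t * sin t * f' t) th
    (sin th * (P_pot l a m xi th - lam) * f th).
Proof.
  intros Hth Hex Heq.
  assert (0 < sin th) by (apply sin_gt_0; lra).
  replace (sin th * (P_pot l a m xi th - lam) * f th)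
    with (Derive (fun t => Delta_th l a t * sin t * f' t) th).
  - exact (Derive_correct _ _ Hex).
  - set (d := Derive _ th) in *.
    replace d with (sin th * (/ sin th * d)) by (field; lra).
    replace (/ sin th * d) with (P_pot l a m xi th * f th - lam * f th) by lra.
    ring.
Qed.

Theorem lemma8p4 :
  forall (l M a rm rp : R),
    0 < l -> 0 < M -> 0 < a -> a < l ->
    0 < rm -> rm < rp ->
    Delta_r l M a rm = 0 -> Delta_r l M a rp = 0 ->
    a * l < rp^2 ->
    exists eps_cut : R, 0 < eps_cut /\
    exists c : R, 0 < c /\
    forall (omega : R) (m : Z) (lam : R),
      (exists r, rm <= r <= rp /\
         Rabs (omega - omega_r l a r * IZR m) <= eps_cut * IZR m) ->
      is_P_eigenvalue l a m (a * omega) lam ->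
      c * (IZR m)^2 <= lam + a^2 * omega^2 - 2 * IZR m * omega * a * Xi l a.
Proof.
  (* Only r >= r_- enters the bound. *)
  intros l M a rm rp Hl _ Ha Hal Hrm _ _ _ _.
  assert (Hal2 : a ^ 2 < l ^ 2) by nra.
  assert (HXi := Xi_pos l a Hl Hal2).
  assert (Hdelta := cut_delta_range a rm Hrm).
  set (delta := cut_delta a rm) in *.
  assert (Heps : 0 < Xi l a * delta / a) by (apply Rdiv_lt_0_compat; nra).
  exists (Xi l a * delta / a). split; [exact Heps |].
  exists ((Xi l a * delta) ^ 2). split; [apply pow_lt; nra |].
  intros omega m lam [r [Hr Hcut]] [f [f' [[t0 [Ht0 Hf0]] [[B HB] [Hf [Hex Heq]]]]]].
  apply Rnot_lt_le. intros HL. apply Hf0.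
  assert (Hm : 0 <= IZR m).
  { assert (0 <= Xi l a * delta / a * IZR m) by (eapply Rle_trans; [apply Rabs_pos | exact Hcut]).
    nra. }
  assert (Hxi := a_omega_le_of_cutoff l a rm r omega (IZR m) Ha ltac:(lra) ltac:(lra) Hm Hcut).
  apply (bounded_solution_vanishes (Delta_th l a) (fun t => P_pot l a m (a * omega) t - lam)
           f f' B); [| | exact Hf | | exact HB | exact Ht0].
  - intros t _. exact (Delta_th_range l a t Hl Hal2).
  - intros t Ht.
    assert (HP := P_pot_lower_bound l a m (a * omega) delta t Hl Hal2 Ht Hm ltac:(lra) Hxi).
    nra.
  - intros t Ht. exact (P_eigenfunction_flux l a m (a * omega) lam f f' t Ht (Hex t Ht) (Heq t Ht)).
Qed.
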